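(* Let $\beta\ge1$. For nonzero $x,y\in\mathbb R^m$ (any $m\ge1$) define $$\cos_{(\beta,\infty)}(x,y)=\Big\langle\Big(\frac{x}{\|x\|_\infty}\Big)^{\ominus\beta},\frac{\mathrm{sign}_\infty(y)}{\|\mathrm{sign}_\infty(y)\|_1}\Big\rangle,$$ where the $i$-th component of $\mathrm{sign}_\infty(y)$ is $\mathrm{sign}(y_i)\,\mathbb I(|y_i|=\|y\|_\infty)$. Let $x=(x_0,x_1)$ and $y=(y_0,y_1)$ with $x_0,y_0\in\mathbb R^{d_0}$ and $x_1,y_1\in\mathbb R^{d_1}$, $d=d_0+d_1$. If $\|x_0\|_\infty>\|x_1\|_\infty$ and $\|y_0\|_\infty>\|y_1\|_\infty$, then $\cos_{(\beta,\infty)}(x_0,y_0)=\cos_{(\beta,\infty)}(x,y)$.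
   Context: $\langle\cdot,\cdot\rangle$ is the Euclidean inner product; $\|v\|_\infty=\max_i|v_i|$, $\|v\|_1=\sum_i|v_i|$. For a vector $v$, $v^{\ominus\beta}$ is taken componentwise with $t^{\ominus\beta}=\mathrm{sign}(t)|t|^\beta$, $\mathrm{sign}(0)=0$; $\mathbb I$ is the indicator function. $\cos_{(\beta,\infty)}$ is the limit as $\gamma\to\infty$ of the $(\beta,\gamma)$-cosine $\langle(x/\|x\|_{\beta+\gamma})^{\ominus\beta},(y/\|y\|_{\beta+\gamma})^{\ominus\gamma}\rangle$. *)

From HB Require Import structures.
From mathcomp Require Import all_boot all_order all_algebra.
From mathcomp Require Import all_classical all_reals all_analysis.
Set Implicit Arguments. Unset Strict Implicit. Unset Printing Implicit Defensive.
Import Order.TTheory GRing.Theory Num.Theory.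
Local Open Scope ring_scope.

Section Defs.
Variable R : realType.

(* ||v||_oo = max_i |v_i| (0 for the empty vector) *)
Definition norminf m (v : 'rV[R]_m) : R := \big[Num.max/0]_(i < m) `|v 0 i|.
Definition norm1 m (v : 'rV[R]_m) : R := \sum_(i < m) `|v 0 i|.
Definition spow (beta t : R) : R := Num.sg t * (`|t| `^ beta).
Definition signinf m (y : 'rV[R]_m) : 'rV[R]_m :=
  \row_(i < m) (Num.sg (y 0 i) * (`|y 0 i| == norminf y)%:R).
Definition cosbinf m (beta : R) (x y : 'rV[R]_m) : R :=
  \sum_(i < m) spow beta (x 0 i / norminf x) * (signinf y 0 i / norm1 (signinf y)).
End Defs.

From HB Require Import structures.
From mathcomp Require Import all_boot all_order all_algebra.
From mathcomp Require Import all_classical all_reals all_analysis.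
Import Order.TTheory GRing.Theory Num.Theory.
Local Open Scope ring_scope.

(* When the first block strictly dominates in sup norm, both sup norms and the
   maximal coordinates of [y] are those of the first block, so the second
   block contributes nothing to [sign_oo(y)], hence nothing to the pairing. *)

Section BlockVectors.
Variable R : realType.

Lemma norminf_ge0 {m : nat} (v : 'rV[R]_m) : 0 <= norminf v.
Proof. by rewrite /norminf bigmax_idl le_max lexx. Qed.

Lemma ler_norminf {m : nat} (v : 'rV[R]_m) i : `|v 0 i| <= norminf v.
Proof. exact: (le_bigmax _ (fun i => `|v 0 i|)). Qed.

Lemma norminf_row_mx {d0 d1 : nat} (u : 'rV[R]_d0) (v : 'rV[R]_d1) :
  norminf (row_mx u v) = Num.max (norminf u) (norminf v).
Proof.
apply: le_anti; apply/andP; split.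
  apply: bigmax_le => [|k _]; first by rewrite le_max norminf_ge0.
  rewrite le_max; case: (split_ordP k) => j ->.
    by rewrite row_mxEl ler_norminf.
  by rewrite row_mxEr ler_norminf orbT.
rewrite ge_max; apply/andP; split; apply: bigmax_le => [|j _];
  rewrite ?norminf_ge0 //.
  by rewrite -(row_mxEl u v) ler_norminf.
by rewrite -(row_mxEr u v) ler_norminf.
Qed.

Lemma norminf_row_mx_dominant {d0 d1 : nat} (u : 'rV[R]_d0) (v : 'rV[R]_d1) :
  norminf v <= norminf u -> norminf (row_mx u v) = norminf u.
Proof. by move=> le_vu; rewrite norminf_row_mx max_l. Qed.

Lemma norm1_row_mx {d0 d1 : nat} (u : 'rV[R]_d0) (v : 'rV[R]_d1) :
  norm1 (row_mx u v) = norm1 u + norm1 v.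
Proof.
by rewrite /norm1 big_split_ord; congr (_ + _); apply: eq_bigr => j _;
  rewrite ?row_mxEl ?row_mxEr.
Qed.

Lemma norm1_0 {m : nat} : norm1 (0 : 'rV[R]_m) = 0.
Proof. by rewrite /norm1 big1 // => i _; rewrite mxE normr0. Qed.

Lemma signinf_row_mx_dominant {d0 d1 : nat} (u : 'rV[R]_d0) (v : 'rV[R]_d1) :
  norminf v < norminf u -> signinf (row_mx u v) = row_mx (signinf u) 0.
Proof.
move=> lt_vu; apply/rowP => k; case: (split_ordP k) => j ->.
all: rewrite mxE norminf_row_mx_dominant ?ltW //.
  by rewrite !row_mxEl mxE.
rewrite !row_mxEr mxE.
by rewrite (lt_eqF (le_lt_trans (ler_norminf v j) lt_vu)) mulr0.
Qed.

End BlockVectors.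

Theorem mainTheorem13 (R : realType) (beta : R) (d0 d1 : nat)
  (x0 y0 : 'rV[R]_d0) (x1 y1 : 'rV[R]_d1) :
  1 <= beta ->
  norminf x1 < norminf x0 ->
  norminf y1 < norminf y0 ->
  cosbinf beta x0 y0 = cosbinf beta (row_mx x0 x1) (row_mx y0 y1).
Proof.
(* The identity holds for every real [beta]. *)
move=> _ lt_x lt_y.
rewrite /cosbinf signinf_row_mx_dominant // norm1_row_mx norm1_0 addr0.
rewrite norminf_row_mx_dominant ?ltW //.
rewrite big_split_ord /= [X in _ + X]big1 ?addr0 => [|j _].
  by apply: eq_bigr => j _; rewrite !row_mxEl.
by rewrite !row_mxEr mxE mul0r mulr0.
Qed.
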